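(* Let $m\ge 3$ and let $K_{1,m}$ be the star with center $v_0$ and pendant vertices $v_1,\dots,v_m$. Then $P_{\{v_1\}}(K_{1,m})>P_{\{v_0\}}(K_{1,m})$, and consequently $\max\{P_A(K_{1,m}): A\subseteq V(K_{1,m}),\ |A|=1\}=P_{\{v_1\}}(K_{1,m})$.
   Context: Classical zero forcing: given a set of black vertices (the rest white), the color change rule turns a white vertex $v$ black if $v$ is the only white neighbor of some black vertex $u$. A set $S$ is a zero forcing set if starting with $S$ black, finitely many applications of this rule make all of $V(G)$ black. Probabilistic process: for a vertex $u$, $N(u)$ is its open neighborhood, $N[u]=N(u)\cup\{u\}$, $\deg(u)=|N(u)|$. Given a current black set $Z$, $F(u\to v)=0$ if $u\notin Z$, or $v\notin N(u)$, or $N[u]\subseteq Z$; otherwise $F(u\to v)=|N[u]\cap Z|/\deg(u)$. One global application of the probabilistic color change rule: black vertices stay black; independently for every pair $(u,v)$ with $u$ black and $v\in N(u)$ white, $u$ forces $v$ with probability $F(u\to v)$; a white vertex becomes black iff some black neighbor forces it. Starting with black set $A$ at step $0$ and applying this rule repeatedly, let $S^k$ be the set of colorings reachable with positive probability after exactly $k$ steps and $P^{(k)}$ the probability distribution on them. Let $T^k\subseteq S^k$ be the colorings whose black set contains a classical zero forcing set of $G$. Define $P_A(G)=P^{(k_0)}(T^{k_0})$ where $k_0$ is the least $k\ge 0$ with $T^k\neq\emptyset$. *)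

From HB Require Import structures.
From mathcomp Require Import all_boot all_order all_algebra.
Set Implicit Arguments. Unset Strict Implicit. Unset Printing Implicit Defensive.
Import Order.TTheory GRing.Theory Num.Theory.

Section PZF.
Variables (V : finType) (e : rel V).

Definition nbhd (u : V) : {set V} := [set w | e u w].
Definition cnbhd (u : V) : {set V} := u |: nbhd u.
Definition deg (u : V) : nat := #|nbhd u|.

(* one round of the classical color change rule (all possible forces at once) *)
Definition cc_step (Z : {set V}) : {set V} :=
  Z :|: [set v | [exists u, [&& u \in Z, v \notin Z, e u v &
            [forall w, (e u w && (w \notin Z)) ==> (w == v)]]]].

(* S is a zero forcing set: repeated application of the rule colours all of V.
   (#|V| rounds suffice, since each nontrivial round adds a vertex.) *)
Definition zfs (S : {set V}) : bool := iter #|V| cc_step S == setT.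

Definition contains_zfs (Z : {set V}) : bool :=
  [exists S : {set V}, (S \subset Z) && zfs S].

Local Open Scope ring_scope.

Definition Fprob (Z : {set V}) (u v : V) : rat :=
  if (u \notin Z) || ~~ e u v || (cnbhd u \subset Z) then 0
  else (#|cnbhd u :&: Z|)%:R / (deg u)%:R.

Definition stay_white (Z : {set V}) (v : V) : rat :=
  \prod_(u in Z | e u v) (1 - Fprob Z u v).

(* probability of going from black set Z to black set Z' in one global step
   (forces for different pairs are independent) *)
Definition trans (Z Z' : {set V}) : rat :=
  if Z \subset Z' then
    \prod_(v | v \notin Z) (if v \in Z' then 1 - stay_white Z v else stay_white Z v)
  else 0.

(* P^{(k)} : distribution on colourings (black sets) after k steps from A *)
Fixpoint dist (A : {set V}) (k : nat) (Z' : {set V}) : rat :=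
  match k with
  | 0 => (Z' == A)%:R
  | k.+1 => \sum_(Z : {set V}) dist A k Z * trans Z Z'
  end.

(* S^k is the support of dist A k; T^k those whose black set contains a ZFS *)
Definition in_S (A : {set V}) (k : nat) (Z : {set V}) : bool := dist A k Z != 0.
Definition T_nonempty (A : {set V}) (k : nat) : bool :=
  [exists Z : {set V}, in_S A k Z && contains_zfs Z].
Definition T_mass (A : {set V}) (k : nat) : rat :=
  \sum_(Z : {set V} | in_S A k Z && contains_zfs Z) dist A k Z.

(* P_A(G) = p : k0 is the least k with T^k nonempty and p = P^{(k0)}(T^{k0}) *)
Definition PA_is (A : {set V}) (p : rat) : Prop :=
  exists k0 : nat, T_nonempty A k0 /\ (forall k, (k < k0)%N -> ~~ T_nonempty A k)
                   /\ p = T_mass A k0.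

End PZF.

(* the star K_{1,m} on vertices 'I_m.+1: center v_0 = ord0, leaves v_i = i *)
Definition star_adj (m : nat) : rel 'I_m.+1 :=
  fun i j => (i == ord0) (+) (j == ord0).
Arguments star_adj m : clear implicits.

From HB Require Import structures.
From mathcomp Require Import all_boot all_order all_algebra.
From mathcomp Require Import zify ring.
Import Order.TTheory GRing.Theory Num.Theory.
Set Implicit Arguments. Unset Strict Implicit. Unset Printing Implicit Defensive.
Local Open Scope ring_scope.

(* Classically, a colouring of K_{1,m} contains a zero forcing set
   iff at most one leaf is white (contains_zfsE).  Probabilistically, once the
   center c is black it is the only vertex that can force, and it forces each
   white leaf independently with probability q = |B|/m (trans_center_set);
   hence one step from such a black set B reaches a colouring containing a
   zero forcing set with probability mass q w = q^w + w (1-q) q^(w-1), where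
   w = |V \ B| (zfs_mass_center_set, via at_most_one_failure).
   Started at {c}, this happens at step 1, so P_{c} = mass (1/m) m; started at
   a leaf l, step 1 deterministically gives {l, c} and step 2 decides, so
   P_{l} = mass (2/m) (m-1) (PA_center, PA_leaf).  An elementary inequality
   (mass_one_lt_two) compares the two values; every singleton is either {c}
   or a leaf, which gives the maximum. *)

(* Probability that at most one of w independent events of probability q
   fails, i.e. at least w - 1 of them succeed. *)
Definition mass (R : pzRingType) (q : R) (w : nat) : R :=
  q ^+ w + ((1 - q) * q ^+ w.-1) *+ w.

Lemma at_most_one_failure (R : comPzRingType) (T : finType) (C : {set T}) (q : R) :
  \sum_(W : {set T} | (W \subset C) && (#|W| <= 1)%N)
     \prod_(v in C) (if v \in W then 1 - q else q) = mass q #|C|.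
Proof.
rewrite (bigD1 set0) ?sub0set ?cards0 //=; congr (_ + _).
  by rewrite -prodr_const; apply: eq_bigr => v _; rewrite inE.
rewrite (eq_bigl (mem [set [set x] | x in C])); last first.
  move=> W /=; apply/idP/imsetP => [/andP [/andP [WC W1] W0] | [x xC ->]].
    have /cards1P [x Wx] : #|W| == 1%N.
      by rewrite eqn_leq W1 card_gt0.
    by exists x; rewrite // -sub1set -Wx.
  rewrite sub1set xC cards1 /=; apply/eqP => /setP /(_ x).
  by rewrite !inE eqxx.
rewrite big_imset /=; last by move=> x y _ _ /set1_inj.
rewrite -sumr_const; apply: eq_bigr => x xC.
rewrite (bigD1 x) //= inE eqxx; congr (_ * _).
rewrite (eq_bigr (fun _ => q)); last by move=> v /andP [_ vx]; rewrite inE (negbTE vx).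
rewrite (eq_bigl (mem (C :\ x))); last by move=> v; rewrite !inE andbC.
by rewrite prodr_const (cardsD1 x C) xC.
Qed.

Lemma mass_one_lt_two (R : realFieldType) (n : nat) (x : R) :
  0 < x -> x * n.+2%:R = 1 -> mass x n.+2 < mass (2 * x) n.+1.
Proof.
move=> x_gt0 xM; set M : R := n.+2%:R in xM.
have M1 : n.+1%:R = M - 1 :> R by rewrite /M -[n.+2]addn1 natrD addrK.
have x_lt1 : x < 1 by rewrite -xM ltr_pMr // ltr1n.
have lhsE : mass x n.+2 = (x * x + 1 - x) * x ^+ n.
  have -> : x * x + 1 - x = x * x + (1 - x) * (x * M) by rewrite xM; ring.
  by rewrite /mass /= -[_ *+ n.+2]mulr_natr -/M !exprS; ring.
have rhsE : mass (2 * x) n.+1 = (M - 3 + 4 * x) * (2 ^+ n * x ^+ n).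
  have -> : M - 3 + 4 * x = 2 * x + (1 - 2 * x) * (M - 1).
    have -> : 2 * x + (1 - 2 * x) * (M - 1) = M - 1 - 2 * (x * M) + 4 * x by ring.
    by rewrite xM; ring.
  by rewrite /mass /= -[_ *+ n.+1]mulr_natr M1 exprS exprMn; ring.
(* the brackets compare since x (R - L) = (1 - 2x)^2 + x^2 (1 - x) > 0 *)
have gap : x * ((M - 3 + 4 * x) - (x * x + 1 - x)) = (1 - 2 * x) ^+ 2 + x * x * (1 - x).
  have -> : x * ((M - 3 + 4 * x) - (x * x + 1 - x)) = x * M - 4 * x + 5 * (x * x) - x * x * x
    by ring.
  by rewrite xM; ring.
have bracket_lt : x * x + 1 - x < M - 3 + 4 * x.
  rewrite -subr_gt0 -(pmulr_rgt0 _ x_gt0) gap.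
  apply: ltr_pwDr; first by rewrite !mulr_gt0 // subr_gt0.
  by rewrite exprn_even_ge0.
have xn_gt0 : 0 < x ^+ n by rewrite exprn_gt0.
have L_gt0 : 0 < x * x + 1 - x by rewrite -addrA ltr_wpDl ?mulr_ge0 ?ltW // subr_gt0.
rewrite lhsE rhsE; apply: (lt_le_trans (y := (M - 3 + 4 * x) * x ^+ n)).
  by rewrite ltr_pM2r.
rewrite ler_pM2l ?(lt_trans L_gt0) // ler_peMl ?(ltW xn_gt0) //.
by rewrite exprn_ege1 // ler1n.
Qed.

Lemma T_massE (V : finType) (e : rel V) (A : {set V}) (k : nat) :
  T_mass e A k = \sum_(Z | contains_zfs e Z) dist e A k Z.
Proof.
rewrite /T_mass [RHS]big_mkcond [LHS]big_mkcond; apply: eq_bigr => Z _.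
by rewrite /in_S; case: eqP => [->|_] /=; case: (contains_zfs e Z).
Qed.

Lemma T_empty_at_start (V : finType) (e : rel V) (A : {set V}) :
  ~~ contains_zfs e A -> ~~ T_nonempty e A 0.
Proof.
move=> nA; apply/existsPn => Z; rewrite /in_S /=.
by case: (Z =P A) => [->|_]; [rewrite (negbTE nA) andbF | rewrite eqxx].
Qed.

Lemma dist_one (V : finType) (e : rel V) (A Z : {set V}) :
  dist e A 1 Z = trans e A Z.
Proof.
rewrite /= (bigD1 A) //= eqxx mul1r big1 ?addr0 // => Y /negbTE ->.
by rewrite mul0r.
Qed.

Section Star.
Variable m : nat.
Local Notation V := 'I_m.+1.
Local Notation e := (star_adj m).
Local Notation c := (ord0 : V).

Lemma star_adjE (u v : V) : e u v = (u == c) (+) (v == c). Proof. by []. Qed.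

Lemma star_adj_center (v : V) : e c v = (v != c).
Proof. by rewrite star_adjE eqxx. Qed.

Lemma star_adj_leaf (l v : V) : l != c -> e l v = (v == c).
Proof. by move=> lc; rewrite star_adjE (negbTE lc). Qed.

Lemma cnbhd_center : cnbhd e c = setT.
Proof. by apply/setP=> v; rewrite !inE star_adj_center orbN. Qed.

Lemma deg_center : deg e c = m.
Proof.
rewrite /deg; have -> : nbhd e c = [set~ c] by apply/setP=> v; rewrite !inE star_adj_center.
by rewrite cardsC1 card_ord.
Qed.

Lemma nbhd_leaf (l : V) : l != c -> nbhd e l = [set c].
Proof. by move=> lc; apply/setP=> v; rewrite !inE star_adj_leaf. Qed.

Lemma cnbhd_leaf (l : V) : l != c -> cnbhd e l = [set l; c].
Proof. by move=> lc; rewrite /cnbhd nbhd_leaf. Qed.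

Lemma deg_leaf (l : V) : l != c -> deg e l = 1%N.
Proof. by move=> lc; rewrite /deg nbhd_leaf // cards1. Qed.

Definition black_leaves (Z : {set V}) : nat := #|Z :\ c|.

Lemma card_with_center (Z : {set V}) : c \in Z -> #|Z| = (black_leaves Z).+1.
Proof. by move=> cZ; rewrite /black_leaves (cardsD1 c Z) cZ. Qed.

Lemma card_setC_star (Z : {set V}) : (#|Z| + #|~: Z| = m.+1)%N.
Proof. by rewrite cardsC card_ord. Qed.

Lemma card_white (Z : {set V}) : c \in Z -> #|~: Z| = (m - black_leaves Z)%N.
Proof. by move=> cZ; have := card_setC_star Z; rewrite card_with_center //; lia. Qed.

Lemma black_leaves_setT : black_leaves setT = m.
Proof. by have := card_with_center (in_setT c); rewrite cardsT card_ord => -[]. Qed.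

(* If at least two leaves are white, no leaf can be forced: the only
   neighbour of a white leaf is the center, which then has two white
   neighbours. *)
Lemma cc_step_stuck (Z : {set V}) :
  ((black_leaves Z).+2 <= m)%N -> cc_step e Z :\ c = Z :\ c.
Proof.
move=> few; apply/setP=> v; rewrite /cc_step !inE.
case: (v =P c) => //= /eqP vc; case vZ: (v \in Z) => //=.
apply/negbTE/existsPn => u; apply/negP => /and3P [uZ euv /forallP only_v].
have /eqP uc : u == c by move: euv; rewrite star_adjE (negbTE vc) addbF.
rewrite {}uc in uZ only_v.
have white_sub : ~: Z \subset [set v].
  apply/subsetP => w; rewrite !inE => wZ.
  have := only_v w; rewrite star_adj_center wZ andbT.
  by case: (w =P c) => [wc|_ /implyP]; [rewrite wc uZ in wZ | apply].
by move: (subset_leq_card white_sub) few; rewrite cards1 card_white //; lia.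
Qed.

Lemma iter_cc_step_stuck (Z : {set V}) (n : nat) :
  ((black_leaves Z).+2 <= m)%N -> black_leaves (iter n (cc_step e) Z) = black_leaves Z.
Proof.
move=> few; elim: n => //= n IH.
by rewrite /black_leaves cc_step_stuck -/(black_leaves _) IH.
Qed.

Lemma not_zfs_stuck (Z : {set V}) : ((black_leaves Z).+2 <= m)%N -> ~~ zfs e Z.
Proof.
move=> few; apply/eqP => all_black.
by have := iter_cc_step_stuck #|V| few; rewrite all_black black_leaves_setT; lia.
Qed.

(* Conversely a colouring with at most one white leaf is forced in two rounds:
   a black leaf forces the center, which then forces the last white leaf. *)
Lemma cc_step_forces_center (Z : {set V}) : (0 < black_leaves Z)%N -> c \in cc_step e Z.
Proof.
case/card_gt0P => u; rewrite !inE => /andP [uc uZ].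
case cZ: (c \in Z) => //=.
apply/existsP; exists u; rewrite uZ star_adj_leaf //=.
by apply/forallP => w; rewrite star_adj_leaf //; apply/implyP => /andP [].
Qed.

Lemma cc_step_completes (Z : {set V}) :
  c \in Z -> (#|~: Z| <= 1)%N -> cc_step e Z = setT.
Proof.
move=> cZ one_white; apply/setP => v; rewrite in_setT /cc_step !inE.
case vZ: (v \in Z) => //=.
have vc : v != c by apply: contraFneq vZ => ->.
apply/existsP; exists c; rewrite cZ star_adj_center vc /=.
apply/forallP => w; rewrite star_adj_center; apply/implyP => /andP [_ wZ].
apply/negPn/negP => wv.
have : [set v; w] \subset ~: Z by rewrite subUset !sub1set !inE vZ wZ.
by move/subset_leq_card; rewrite cards2 eq_sym wv => /leq_trans/(_ one_white).
Qed.

Lemma iter_cc_step_setT (n : nat) : iter n (cc_step e) setT = setT.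
Proof. by elim: n => //= n ->; apply/eqP; rewrite eqEsubset subsetT subsetUl. Qed.

Lemma zfs_one_white (Z : {set V}) :
  (1 < m)%N -> (m <= (black_leaves Z).+1)%N -> zfs e Z.
Proof.
move=> m_gt1 many.
have leaves_le : (black_leaves Z <= black_leaves (cc_step e Z))%N.
  by apply/subset_leq_card/setSD/subsetUl.
have cY : c \in cc_step e Z by apply: cc_step_forces_center; lia.
have one_white : (#|~: cc_step e Z| <= 1)%N.
  by rewrite card_white //; lia.
rewrite /zfs; have [k ->] : exists k, #|V| = (k + 2)%N.
  by exists (m.+1 - 2)%N; rewrite card_ord; lia.
by rewrite iterD /= cc_step_completes // iter_cc_step_setT.
Qed.

Lemma contains_zfsE (Z : {set V}) :
  (1 < m)%N -> contains_zfs e Z = (m <= (black_leaves Z).+1)%N.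
Proof.
move=> m_gt1; apply/existsP/idP => [[S /andP [SZ zS]] | many].
  rewrite leqNgt; apply: contraL zS => few; apply: not_zfs_stuck.
  by apply: leq_ltn_trans few; apply/subset_leq_card/setSD.
by exists Z; rewrite subxx zfs_one_white.
Qed.

Lemma contains_zfs_center (Z : {set V}) :
  (1 < m)%N -> c \in Z -> contains_zfs e Z = (#|~: Z| <= 1)%N.
Proof. by move=> m_gt1 cZ; rewrite contains_zfsE // card_white //; lia. Qed.

(* Once the center is black, it is the only vertex that can force, and it
   forces each white leaf independently with probability |B| / m. *)
Definition force_prob (B : {set V}) : rat := #|B|%:R / m%:R.

Lemma stay_white_center_set (B : {set V}) (v : V) :
  c \in B -> v \notin B -> stay_white e B v = 1 - force_prob B.
Proof.
move=> cB vB; have vc : v != c by apply: contraNneq vB => ->.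
rewrite /stay_white (big_pred1 c); last first.
  move=> u /=; rewrite star_adjE (negbTE vc) addbF.
  by case: (u =P c) => [->|]; rewrite ?cB ?andbF.
have notT : ([set: V] \subset B) = false.
  by apply/negbTE; apply: contraNN vB => /subsetP; apply.
by rewrite /Fprob cB star_adj_center vc cnbhd_center notT /= setTI deg_center.
Qed.

Lemma trans_center_set (B Z : {set V}) : c \in B -> trans e B Z =
  if B \subset Z then \prod_(v in ~: B) (if v \in Z then force_prob B else 1 - force_prob B)
  else 0.
Proof.
move=> cB; rewrite /trans; case: ifP => // _.
rewrite [LHS](eq_bigl (fun v => v \in ~: B)); last by move=> v; rewrite inE.
apply: eq_bigr => v; rewrite inE => vB; rewrite stay_white_center_set //.
by case: ifP => _ //; ring.
Qed.

(* From a black set B containing the center, the next colouring contains a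
   zero forcing set iff at most one of the independent forcings fails. *)
Lemma zfs_mass_center_set (B : {set V}) : (1 < m)%N -> c \in B ->
  \sum_(Z | contains_zfs e Z) trans e B Z = mass (force_prob B) #|~: B|.
Proof.
move=> m_gt1 cB; rewrite -at_most_one_failure.
rewrite (reindex_inj (@setC_inj _)) /= [RHS]big_mkcond [LHS]big_mkcond.
apply: eq_bigr => W _; rewrite trans_center_set // subsetC.
case WB: (W \subset ~: B); last by rewrite if_same.
have cW : c \in ~: W by rewrite inE; apply: contraTN cB => /(subsetP WB); rewrite inE.
rewrite contains_zfs_center // setCK; case: (#|W| <= 1)%N => //.
by apply: eq_bigr => v _; rewrite inE; case: (v \in W).
Qed.

(* A single black leaf l forces the center with probability 1 and nothing
   else can happen, so after one step the black set is exactly {l, c}. *)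
Lemma trans_from_leaf (l : V) (Y : {set V}) :
  l != c -> trans e [set l] Y = (Y == [set l; c])%:R.
Proof.
move=> lc.
have center_forced : stay_white e [set l] c = 0.
  rewrite /stay_white (big_pred1 l); last first.
    by move=> u /=; rewrite inE star_adjE eqxx addbT; case: (u =P l) => [->|].
  have notsub : ([set l; c] \subset [set l]) = false.
    by apply/negbTE/subsetPn; exists c; rewrite !inE ?eqxx ?orbT // eq_sym.
  have lcl : [set l; c] :&: [set l] = [set l] by apply/setIidPr; rewrite sub1set set21.
  rewrite /Fprob set11 star_adj_leaf //= cnbhd_leaf // notsub deg_leaf // lcl.
  by rewrite cards1 divr1 subrr.
have leaf_unforced v : v != c -> v != l -> stay_white e [set l] v = 1.
  move=> vc vl; rewrite /stay_white big_pred0 // => u.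
  rewrite inE star_adjE (negbTE vc) addbF.
  by case: (u =P l) => [->|] //=; rewrite (negbTE lc).
rewrite /trans sub1set; case lY: (l \in Y); last first.
  by case: eqP => // YE; rewrite YE !inE eqxx in lY.
case: (Y =P [set l; c]) => [-> | YN].
  apply: big1 => v; rewrite inE => vl; case: (v =P c) => [-> | /eqP vc].
    by rewrite !inE eqxx orbT center_forced subr0.
  by rewrite !inE (negbTE vl) (negbTE vc) leaf_unforced.
case cY: (c \in Y); last first.
  by rewrite (bigD1 c) /= ?inE 1?eq_sym // cY center_forced mul0r.
have /subsetPn [w wY] : ~~ (Y \subset [set l; c]).
  apply/negP => sub; apply: YN; apply/eqP.
  by rewrite eqEsubset sub /= subUset !sub1set lY cY.
rewrite !inE => /norP [wl wc].
by rewrite (bigD1 w) ?inE //= wY leaf_unforced // subrr mul0r.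
Qed.

Lemma dist_two_from_leaf (l : V) (Z : {set V}) :
  l != c -> dist e [set l] 2 Z = trans e [set l; c] Z.
Proof.
move=> lc.
have -> : dist e [set l] 2 Z = \sum_Y dist e [set l] 1 Y * trans e Y Z by [].
rewrite (eq_bigr (fun Y => (Y == [set l; c])%:R * trans e Y Z)).
  rewrite (bigD1 [set l; c]) //= eqxx mul1r big1 ?addr0 // => Y /negbTE ->.
  by rewrite mul0r.
by move=> Y _; rewrite dist_one trans_from_leaf.
Qed.

Lemma PA_center_step (A B : {set V}) (k : nat) :
  (1 < m)%N -> c \in B -> (forall Z, dist e A k Z = trans e B Z) ->
  (forall j, (j < k)%N -> ~~ T_nonempty e A j) ->
  PA_is e A (mass (force_prob B) #|~: B|).
Proof.
move=> m_gt1 cB distE before; exists k; split; [|split=> //].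
  apply/existsP; exists setT; rewrite contains_zfs_center ?inE ?setCT ?cards0 //.
  rewrite /in_S distE trans_center_set // subsetT andbT.
  rewrite (eq_bigr (fun _ => force_prob B)) => [|v _]; last by rewrite in_setT.
  rewrite prodr_const expf_neq0 // gt_eqF // divr_gt0 ?ltr0n ?(ltnW m_gt1) //.
  by apply/card_gt0P; exists c.
by rewrite T_massE (eq_bigr _ (fun Z _ => distE Z)) zfs_mass_center_set.
Qed.

Lemma PA_center : (1 < m)%N -> PA_is e [set c] (mass (m%:R^-1) m).
Proof.
move=> m_gt1.
have := PA_center_step (k := 1) m_gt1 (set11 c) (dist_one _ _).
rewrite /force_prob cards1 div1r cardsC1 card_ord; apply.
move=> j; rewrite ltnS leqn0 => /eqP ->; apply: T_empty_at_start.
by rewrite contains_zfsE // /black_leaves setDv cards0 -ltnNge.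
Qed.

Lemma PA_leaf (l : V) :
  (2 < m)%N -> l != c -> PA_is e [set l] (mass (2 * m%:R^-1) m.-1).
Proof.
move=> m_gt2 lc; have m_gt1 := ltnW m_gt2.
have lcC : [set l; c] :\ c = [set l].
  apply/setP => v; rewrite !inE.
  by case: (v =P l) => [->|_] /=; [rewrite lc | case: (v == c)].
have two_black : ~~ contains_zfs e [set l; c].
  by rewrite contains_zfsE // /black_leaves lcC cards1 -ltnNge.
have := PA_center_step (k := 2) m_gt1 (set22 l c) (fun Z => dist_two_from_leaf Z lc).
rewrite /force_prob cards2 lc card_white ?set22 // /black_leaves lcC cards1 subn1.
apply; move=> j; rewrite ltnS leq_eqVlt ltnS leqn0 => /orP [] /eqP ->.
  apply/existsPn => Z; rewrite /in_S dist_one trans_from_leaf //.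
  by case: (Z =P [set l; c]) => [->|_]; rewrite ?(negbTE two_black) ?andbF ?eqxx.
apply: T_empty_at_start; apply: contra two_black.
by rewrite !contains_zfsE // => /leq_trans; apply; apply/subset_leq_card/setSD/subsetUl.
Qed.

End Star.

Theorem mainTheorem5 (m : nat) (hm : (3 <= m)%N) :
  let v0 : 'I_m.+1 := ord0 in
  let v1 : 'I_m.+1 := inord 1 in
  exists p1 p0 : rat,
    PA_is (star_adj m) [set v1] p1 /\ PA_is (star_adj m) [set v0] p0 /\ p0 < p1 /\
    (forall A : {set 'I_m.+1}, #|A| = 1%N ->
       exists p : rat, PA_is (star_adj m) A p /\ p <= p1).
Proof.
move=> v0 v1; have m_gt1 : (1 < m)%N by apply: ltnW.
have v1_leaf : v1 != v0.
  by apply/eqP => /(congr1 val); rewrite /= inordK // ltnS ltnW.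
have center_lt_leaf : mass (m%:R^-1 : rat) m < mass (2 * m%:R^-1) m.-1.
  case: m {hm v0 v1 v1_leaf} m_gt1 => [|[|n]] //= _; apply: mass_one_lt_two.
    by rewrite invr_gt0 ltr0n.
  by rewrite mulVf // pnatr_eq0.
exists (mass (2 * m%:R^-1) m.-1), (mass (m%:R^-1) m).
split; first exact: PA_leaf.
split; first exact: PA_center.
split=> // A /eqP /cards1P [a ->].
have [-> | a_leaf] := eqVneq a v0.
  by exists (mass (m%:R^-1) m); split; [exact: PA_center | exact: ltW].
by exists (mass (2 * m%:R^-1) m.-1); split; [exact: PA_leaf |].
Qed.
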